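(* In the setting described in the context: (i) Type A blowup occurs if and only if either ($0<v_0<1$ and $\omega_0>-\frac{\nu}{2}f_0(v_0)$) or ($v_0>1$ and $\omega_0<-\frac{\nu}{2}f_0(v_0)$). (ii) Type B blowup occurs if and only if either ($0<v_0<1$ and $\omega_0<-\frac{\nu}{2}f_\infty(v_0)$) or ($v_0>1$ and $\omega_0>-\frac{\nu}{2}f_\infty(v_0)$). (iii) In either blowup type, $\|\omega(\cdot,t)\|_{L^2}\to\infty$ and $\|\omega(\cdot,t)\|_{B_0}\to\infty$ as $t\to t_c^-$. (iv) If either ($0<v_0<1$ and $-\frac{\nu}{2}f_\infty(v_0)\le\omega_0\le-\frac{\nu}{2}f_0(v_0)$) or ($v_0>1$ and $-\frac{\nu}{2}f_0(v_0)\le\omega_0\le-\frac{\nu}{2}f_\infty(v_0)$), then neither type of blowup occurs and $v_c(t)\in(0,\infty)$ for all $t>0$, so the solution exists globally.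
   Context: Fix $\nu>0$, $v_0>0$ with $v_0\neq1$, and $\omega_0\in\mathbb{R}$. Consider the real ODE system $\frac{d\omega_{-2,i}}{dt}=\omega_{-2,i}^2\frac{1-2v_c^2+5v_c^4}{4v_c^2(1-v_c^2)^2}-\nu\omega_{-2,i}$, $\frac{dv_c}{dt}=-\omega_{-2,i}\frac{1+v_c^2}{4v_c(1-v_c^2)}$ with $v_c(0)=v_0$, $\omega_{-2,i}(0)=\omega_0$; its solution (continued through $v_c=1$) is characterized as follows. Let $F(v)=\frac{v(v^2-1)}{(v^2+1)^2}+\arctan v$, which is a strictly increasing bijection from $(0,\infty)$ onto $(0,\pi/2)$, and let $G(t)=F(v_0)+\frac{2\omega_0 v_0(1-e^{-\nu t})}{\nu(v_0^2-1)(v_0^2+1)^2}$. Then $v_c(t)$ is defined by $F(v_c(t))=G(t)$ for as long as $G(t)\in(0,\pi/2)$, and $\omega_{-2,i}(t)=\omega_0e^{-\nu t}\frac{v_0}{v_c(t)}\frac{v_c(t)^2-1}{v_0^2-1}\left(\frac{v_c(t)^2+1}{v_0^2+1}\right)^2$. Type A blowup means: there is a finite $t_c>0$ with $v_c(t)>0$ on $[0,t_c)$ and $v_c(t)\to0^+$ as $t\to t_c^-$. Type B blowup means: there is a finite $t_c>0$ with $v_c(t)\in(0,\infty)$ on $[0,t_c)$ and $v_c(t)\to+\infty$ as $t\to t_c^-$. Here $f_0(x)=(x^2-1)^2+\frac{(x^2+1)^2}{x}(x^2-1)\arctan(x)$ and $f_\infty(x)=(x^2-1)^2+\frac{(x^2+1)^2}{x}(x^2-1)\left(\arctan(x)-\frac{\pi}{2}\right)$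 for $x>0$. The associated $2\pi$-periodic real function is $\omega(x,t)=\omega_-(x,t)+\overline{\omega_-(\bar x,t)}$, where, with $X=\tan(x/2)$, $\omega_{-2}=\mathrm{i}\omega_{-2,i}$ and $\omega_{-1}=\frac{2\mathrm{i}v_c}{1-v_c^2}\omega_{-2}$, $\omega_-(x,t)=\omega_{-1}\left[\frac{1}{X-\mathrm{i}v_c}-\frac{1}{-\mathrm{i}-\mathrm{i}v_c}\right]+\omega_{-2}\left[\frac{1}{(X-\mathrm{i}v_c)^2}-\frac{1}{(-\mathrm{i}-\mathrm{i}v_c)^2}\right]$. Norms: $\|f\|_{L^2}^2=\int_{-\pi}^{\pi}|f|^2dx$ and $\|f\|_{B_0}=\sum_{k\in\mathbb{Z}}|\hat f_k|$ with $\hat f_k=\frac{1}{2\pi}\int_{-\pi}^{\pi}f(x)e^{-\mathrm{i}kx}dx$. *)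

From Stdlib Require Import Reals ClassicalEpsilon.
From Coquelicot Require Import Coquelicot.
Open Scope R_scope.

Definition Ffun (v : R) : R := v * (v ^ 2 - 1) / (v ^ 2 + 1) ^ 2 + atan v.

Definition Gfun (nu v0 w0 t : R) : R :=
  Ffun v0 + 2 * w0 * v0 * (1 - exp (- nu * t)) / (nu * (v0 ^ 2 - 1) * (v0 ^ 2 + 1) ^ 2).

Definition defined_at (nu v0 w0 t : R) : Prop := 0 < Gfun nu v0 w0 t < PI / 2.

(* v_c(t): the (unique, F being a bijection (0,oo) -> (0,pi/2)) v > 0 with
   F(v) = G(t); an arbitrary value when G(t) is out of range (never used there). *)
Definition vc (nu v0 w0 t : R) : R :=
  epsilon (inhabits 0) (fun v => 0 < v /\ Ffun v = Gfun nu v0 w0 t).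

Definition w2i (nu v0 w0 t : R) : R :=
  let v := vc nu v0 w0 t in
  w0 * exp (- nu * t) * (v0 / v) * ((v ^ 2 - 1) / (v0 ^ 2 - 1))
     * ((v ^ 2 + 1) / (v0 ^ 2 + 1)) ^ 2.

Definition omega_minus (nu v0 w0 x t : R) : C :=
  let v := vc nu v0 w0 t in
  let X : C := RtoC (tan (x / 2)) in
  let om2 : C := Cmult Ci (RtoC (w2i nu v0 w0 t)) in
  let om1 : C := Cmult (Cdiv (Cmult (RtoC 2) (Cmult Ci (RtoC v))) (RtoC (1 - v ^ 2))) om2 in
  let d : C := Cminus X (Cmult Ci (RtoC v)) in
  let e : C := Cminus (Copp Ci) (Cmult Ci (RtoC v)) in
  Cplus (Cmult om1 (Cminus (Cinv d) (Cinv e)))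
        (Cmult om2 (Cminus (Cinv (Cmult d d)) (Cinv (Cmult e e)))).

(* omega(x,t) = omega_-(x,t) + conj(omega_-(conj x, t)); for real x, conj x = x,
   and the result is real, so we take its real part (imaginary part is 0). *)
Definition omega (nu v0 w0 x t : R) : R :=
  fst (Cplus (omega_minus nu v0 w0 x t) (Cconj (omega_minus nu v0 w0 x t))).

Definition L2norm (f : R -> R) : R := sqrt (RInt (fun x => (f x) ^ 2) (- PI) PI).

(* |hat f_k| with hat f_k = (1/2pi) int_{-pi}^{pi} f(x) e^{-ikx} dx, f real *)
Definition fourier_coef (f : R -> R) (k : Z) : C :=
  (/ (2 * PI) * RInt (fun x => f x * cos (IZR k * x)) (- PI) PI,
   - (/ (2 * PI) * RInt (fun x => f x * sin (IZR k * x)) (- PI) PI)).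

(* ||f||_{B_0} = sum_{k in Z} |hat f_k|, in [0, +oo] (limit of the nondecreasing
   symmetric partial sums over -N..N). *)
Definition B0norm (f : R -> R) : Rbar :=
  Lim_seq (fun N => sum_f_R0 (fun j => Cmod (fourier_coef f (Z.of_nat j - Z.of_nat N)%Z))
                             (2 * N)).

Definition blowupA_at (nu v0 w0 tc : R) : Prop :=
  0 < tc /\ (forall t, 0 <= t < tc -> defined_at nu v0 w0 t /\ 0 < vc nu v0 w0 t)
  /\ filterlim (vc nu v0 w0) (at_left tc) (at_right 0).

Definition blowupA (nu v0 w0 : R) : Prop := exists tc, blowupA_at nu v0 w0 tc.

Definition blowupB_at (nu v0 w0 tc : R) : Prop :=
  0 < tc /\ (forall t, 0 <= t < tc -> defined_at nu v0 w0 t /\ 0 < vc nu v0 w0 t)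
  /\ filterlim (vc nu v0 w0) (at_left tc) (Rbar_locally p_infty).

Definition blowupB (nu v0 w0 : R) : Prop := exists tc, blowupB_at nu v0 w0 tc.

Definition f0 (x : R) : R :=
  (x ^ 2 - 1) ^ 2 + (x ^ 2 + 1) ^ 2 / x * (x ^ 2 - 1) * atan x.
Definition finf (x : R) : R :=
  (x ^ 2 - 1) ^ 2 + (x ^ 2 + 1) ^ 2 / x * (x ^ 2 - 1) * (atan x - PI / 2).

From Stdlib Require Import Reals Lra Lia Psatz ClassicalEpsilon.
From Coquelicot Require Import Coquelicot.
Open Scope R_scope.

(* F is an increasing bijection from (0, oo) onto (0, pi/2) with F(1/v) = pi/2 - F(v), and
   G(t) = e^(-nu t) F(v0) + (1 - e^(-nu t)) G_oo moves monotonically from F(v0) towards its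
   limit G_oo.  Hence v_c reaches 0 (resp. oo) in finite time exactly when G_oo < 0
   (resp. G_oo > pi/2), and since w0 is a signed multiple of G_oo - F(v0) these are the stated
   conditions on w0.  For the norms, omega(x, t) = A(t) P_(v_c(t))(x), where A stays away from 0
   up to t_c and P_v is of size v^-3 on a window of width v next to x = 0; the symmetry
   P_(1/v)(x) = P_v(pi - x) transfers this to v -> oo.  Both norms are therefore at least of
   order 1/v_c (resp. v_c). *)

(** * The function F *)

Lemma Ffun_derive x : is_derive Ffun x (8 * x ^ 2 / (x ^ 2 + 1) ^ 3).
Proof.
  assert (Hx : x ^ 2 + 1 <> 0) by nra.
  replace (8 * x ^ 2 / (x ^ 2 + 1) ^ 3)
    with ((6 * x ^ 2 - x ^ 4 - 1) / (x ^ 2 + 1) ^ 3 + / (1 + x²))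
    by (unfold Rsqr; field; nra).
  apply (is_derive_plus (fun v => v * (v ^ 2 - 1) / (v ^ 2 + 1) ^ 2) atan).
  - auto_derive; [nra|]. simpl. field. nra.
  - apply is_derive_atan.
Qed.

Lemma Ffun_continuous x : continuous Ffun x.
Proof. apply (ex_derive_continuous (V := R_NormedModule)). eexists. apply Ffun_derive. Qed.

Lemma Ffun_lt x y : 0 <= x -> x < y -> Ffun x < Ffun y.
Proof.
  intros Hx Hxy.
  destruct (MVT_cor2 Ffun (fun c => 8 * c ^ 2 / (c ^ 2 + 1) ^ 3) x y Hxy)
    as [c [Hmvt Hc]].
  { intros c _. apply is_derive_Reals, Ffun_derive. }
  assert (0 < 8 * c ^ 2 / (c ^ 2 + 1) ^ 3)
    by (apply Rdiv_lt_0_compat; [nra | apply pow_lt; nra]).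
  nra.
Qed.

Lemma Ffun_lt_reg x y : 0 <= y -> Ffun x < Ffun y -> x < y.
Proof.
  intros Hy HF. destruct (Rlt_or_le x y) as [|[Hyx | ->]]; [assumption | | lra].
  pose proof (Ffun_lt y x Hy Hyx). lra.
Qed.

Lemma Ffun_0 : Ffun 0 = 0.
Proof. unfold Ffun. rewrite atan_0. field. Qed.

Lemma Ffun_pos v : 0 < v -> 0 < Ffun v.
Proof. intro Hv. rewrite <- Ffun_0. apply Ffun_lt; lra. Qed.

Lemma Ffun_inv v : 0 < v -> Ffun (/ v) = PI / 2 - Ffun v.
Proof. intro Hv. unfold Ffun. rewrite atan_inv by assumption. field. nra. Qed.

Lemma Ffun_lt_PI2 v : 0 < v -> Ffun v < PI / 2.
Proof.
  intro Hv. pose proof (Ffun_pos (/ v) (Rinv_0_lt_compat v Hv)) as Hinv.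
  rewrite Ffun_inv in Hinv by assumption. lra.
Qed.

Lemma Ffun_lim_infty : filterlim Ffun (Rbar_locally p_infty) (locally (PI / 2)).
Proof.
  apply filterlim_locally. intro eps.
  assert (H0 := proj1 (filterlim_locally _ _) (Ffun_continuous 0) eps).
  destruct H0 as [d Hd]. rewrite Ffun_0 in Hd.
  exists (/ d). intros v Hv.
  assert (Hvpos : 0 < v) by (pose proof (Rinv_0_lt_compat d (cond_pos d)); lra).
  assert (Hsmall : / v < d).
  { rewrite <- (Rinv_inv d). apply Rinv_lt_contravar; [|assumption].
    apply Rmult_lt_0_compat; [apply Rinv_0_lt_compat, cond_pos | assumption]. }
  specialize (Hd (/ v)). rewrite Ffun_inv in Hd by assumption.
  change (Rabs (Ffun v - PI / 2) < eps).
  change (Rabs (/ v - 0) < d -> Rabs (PI / 2 - Ffun v - 0) < eps) in Hd.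
  replace (Ffun v - PI / 2) with (- (PI / 2 - Ffun v - 0)) by ring.
  rewrite Rabs_Ropp. apply Hd.
  rewrite Rminus_0_r, Rabs_right; [assumption|].
  left. apply Rinv_0_lt_compat. lra.
Qed.

Lemma Ffun_surj y : 0 < y < PI / 2 -> exists v, 0 < v /\ Ffun v = y.
Proof.
  intro Hy.
  assert (He : 0 < PI / 2 - y) by lra.
  destruct (proj1 (filterlim_locally _ _) Ffun_lim_infty (mkposreal _ He)) as [M HM].
  set (b := Rmax M 0 + 1).
  assert (Hb : y < Ffun b).
  { specialize (HM b ltac:(unfold b; pose proof (Rmax_l M 0); lra)).
    change (Rabs (Ffun b - PI / 2) < PI / 2 - y) in HM.
    apply Rabs_def2 in HM. lra. }
  assert (Hb0 : 0 < b) by (unfold b; pose proof (Rmax_r M 0); lra).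
  destruct (IVT_gen Ffun 0 b y) as [v [Hv Fv]].
  - intro x. apply continuity_pt_filterlim, Ffun_continuous.
  - rewrite Ffun_0, Rmin_left, Rmax_right; lra.
  - exists v. rewrite Rmin_left in Hv by lra. split; [|assumption].
    destruct (proj1 Hv) as [|<-]; [assumption|]. rewrite Ffun_0 in Fv. lra.
Qed.

Lemma vc_spec nu v0 w0 t : defined_at nu v0 w0 t ->
  0 < vc nu v0 w0 t /\ Ffun (vc nu v0 w0 t) = Gfun nu v0 w0 t.
Proof. intro H. unfold vc. apply epsilon_spec, Ffun_surj, H. Qed.

Lemma ratio_between a b c : a < b < c \/ c < b < a -> 0 < (b - a) / (c - a) < 1.
Proof.
  assert (Hq : forall u w, 0 < u < w -> 0 < u / w < 1).
  { intros u w Huw. split; [apply Rdiv_lt_0_compat; lra|].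
    apply (Rmult_lt_reg_r w); [lra|]. unfold Rdiv. rewrite Rmult_assoc, Rinv_l; lra. }
  intros [H | H]; [apply Hq; lra|].
  replace ((b - a) / (c - a)) with ((a - b) / (a - c)) by (field; lra). apply Hq; lra.
Qed.

Lemma lt_div_of_small M C p : 0 < C -> 0 < p < C / (Rabs M + 1) -> M < C / p.
Proof.
  intros HC [Hp Hsmall]. pose proof (Rle_abs M). pose proof (Rabs_pos M).
  apply Rlt_le_trans with (Rabs M + 1); [lra|].
  apply (Rmult_le_reg_r p); [lra|].
  replace (C / p * p) with C by (field; lra).
  apply (Rmult_lt_compat_r (Rabs M + 1)) in Hsmall; [|lra].
  replace (C / (Rabs M + 1) * (Rabs M + 1)) with C in Hsmall by (field; lra). lra.
Qed.

Lemma x_le_sqrt x : 0 <= x <= 1 -> x <= sqrt x.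
Proof.
  intro Hx. rewrite <- (sqrt_pow2 x) at 1 by lra.
  apply sqrt_le_1_alt. nra.
Qed.

Lemma div_sq_le n d p q : 0 <= n <= p -> 0 < q <= d -> n / d ^ 2 <= p / q ^ 2.
Proof.
  intros [Hn Hnp] [Hq Hqd]. unfold Rdiv. apply Rmult_le_compat; [lra | | lra |].
  - left. apply Rinv_0_lt_compat. nra.
  - apply Rinv_le_contravar; nra.
Qed.

Lemma cos_ge_half y : 0 <= y <= 1 -> 1 / 2 <= cos y.
Proof.
  intro Hy. replace y with (2 * (y / 2)) by field. rewrite cos_2a_sin.
  pose proof PI2_3_2.
  assert (0 <= sin (y / 2)) by (apply sin_ge_0; lra).
  assert (sin (y / 2) <= y / 2)
    by (destruct (proj1 Hy) as [Hpos | <-];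
        [left; apply sin_lt_x; lra | replace (0 / 2) with 0 by field; rewrite sin_0; lra]).
  nra.
Qed.

Lemma sin_ge_half y : 0 <= y <= 1 -> y / 2 <= sin y.
Proof.
  intros [[Hpos | <-] Hy1]; [| rewrite sin_0; lra].
  destruct (MVT_cor2 sin cos 0 y Hpos) as [c [Hmvt Hc]].
  { intros c _. apply derivable_pt_lim_sin. }
  rewrite sin_0 in Hmvt. pose proof (cos_ge_half c ltac:(lra)). nra.
Qed.

Lemma at_left_nonneg tc : 0 < tc -> at_left tc (fun t => 0 <= t < tc).
Proof.
  intro Htc. exists (mkposreal tc Htc). intros t Ht Hlt.
  change (Rabs (t - tc) < tc) in Ht. apply Rabs_def2 in Ht. lra.
Qed.

(** * Lower bounds for the L2 and B0 norms *)

Lemma sum_f_R0_ge_term (g : nat -> R) n j :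
  (forall i, 0 <= g i) -> (j <= n)%nat -> g j <= sum_f_R0 g n.
Proof.
  intro Hg. induction n as [|n IH]; intro Hj; simpl.
  - replace j with 0%nat by lia. lra.
  - destruct (Nat.eq_dec j (S n)) as [-> | Hne].
    + pose proof (cond_pos_sum g n Hg). lra.
    + pose proof (IH ltac:(lia)). pose proof (Hg (S n)). lra.
Qed.

Lemma RInt_ge_subinterval (g : R -> R) lo a b hi m :
  lo <= a <= b -> b <= hi -> (forall x, continuous g x) ->
  (forall x, lo <= x <= hi -> 0 <= g x) -> (forall x, a <= x <= b -> m <= g x) ->
  (b - a) * m <= RInt g lo hi.
Proof.
  intros Ha Hb Hc Hpos Hm.
  assert (Hex : forall u w, ex_RInt g u w)
    by (intros; apply (ex_RInt_continuous (V := R_CompleteNormedModule)); intros; apply Hc).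
  rewrite <- (RInt_Chasles g lo a hi), <- (RInt_Chasles g a b hi) by apply Hex.
  assert (0 <= RInt g lo a) by (apply RInt_ge_0; [lra | apply Hex | intros; apply Hpos; lra]).
  assert (0 <= RInt g b hi) by (apply RInt_ge_0; [lra | apply Hex | intros; apply Hpos; lra]).
  assert ((b - a) * m <= RInt g a b).
  { replace ((b - a) * m) with (RInt (fun _ => m) a b) by (rewrite RInt_const; reflexivity).
    apply RInt_le; [lra | apply ex_RInt_const | apply Hex |].
    intros; apply Hm; lra. }
  unfold plus; simpl. lra.
Qed.

Lemma L2norm_ge (f g : R -> R) a b m :
  - PI <= a <= b -> b <= PI -> (forall x, - PI < x < PI -> f x = g x) ->
  (forall x, continuous g x) -> 0 <= m -> (forall x, a <= x <= b -> m <= Rabs (g x)) ->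
  sqrt (b - a) * m <= L2norm f.
Proof.
  intros Ha Hb Hfg Hc Hm Hgm.
  unfold L2norm.
  rewrite (RInt_ext _ (fun x => g x * g x)).
  2:{ intros x Hx. pose proof PI_RGT_0.
      rewrite Rmin_left, Rmax_right in Hx by lra. rewrite Hfg by lra. simpl. ring. }
  rewrite <- (sqrt_pow2 m Hm), <- sqrt_mult; [| lra | apply pow2_ge_0].
  apply sqrt_le_1_alt.
  apply RInt_ge_subinterval; [lra | lra | | intros; nra |].
  - intro x. apply (continuous_mult (K := R_AbsRing)); apply Hc.
  - intros x Hx. replace (g x * g x) with (Rabs (g x) ^ 2) by (rewrite pow2_abs; ring).
    apply pow_incr. split; [assumption | apply Hgm, Hx].
Qed.

Lemma B0norm_ge_coef1 f : Rbar_le (Cmod (fourier_coef f 1)) (B0norm f).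
Proof.
  unfold B0norm. rewrite <- (Lim_seq_const (Cmod (fourier_coef f 1))) at 1.
  apply Lim_seq_le_loc. exists 1%nat. intros N HN.
  replace (Cmod (fourier_coef f 1))
    with (Cmod (fourier_coef f (Z.of_nat (N + 1) - Z.of_nat N)%Z)) by (do 2 f_equal; lia).
  apply (sum_f_R0_ge_term (fun j => Cmod (fourier_coef f (Z.of_nat j - Z.of_nat N)%Z)));
    [intro; apply Cmod_ge_0 | lia].
Qed.

Lemma fourier_coef1_ge f :
  Rabs (/ (2 * PI) * RInt (fun x => f x * sin x) (- PI) PI) <= Cmod (fourier_coef f 1).
Proof.
  eapply Rle_trans; [| apply Rmax_Cmod]. eapply Rle_trans; [| apply Rmax_r].
  unfold fourier_coef. simpl. rewrite Rabs_Ropp.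
  right. do 2 f_equal. apply RInt_ext. intros. rewrite Rmult_1_l. reflexivity.
Qed.

Lemma B0norm_ge (f j : R -> R) K a b m :
  - PI <= a <= b -> b <= PI -> (forall x, - PI < x < PI -> f x * sin x = K * j x) ->
  (forall x, continuous j x) -> (forall x, 0 <= j x) -> (forall x, a <= x <= b -> m <= j x) ->
  Rbar_le (Rabs K * ((b - a) * m) / (2 * PI)) (B0norm f).
Proof.
  intros Ha Hb Hfj Hc Hpos Hm. pose proof PI_RGT_0.
  eapply Rbar_le_trans; [| apply B0norm_ge_coef1].
  eapply Rle_trans; [| apply fourier_coef1_ge].
  rewrite (RInt_ext _ (fun x => K * j x)).
  2:{ intros x Hx. rewrite Rmin_left, Rmax_right in Hx by lra. apply Hfj, Hx. }
  rewrite (RInt_scal (V := R_CompleteNormedModule) j)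
    by (apply (ex_RInt_continuous (V := R_CompleteNormedModule)); intros; apply Hc).
  assert (HR : (b - a) * m <= RInt j (- PI) PI)
    by (apply RInt_ge_subinterval; auto).
  assert (0 <= RInt j (- PI) PI) by (apply RInt_ge_0; [lra | | intros; apply Hpos];
    apply (ex_RInt_continuous (V := R_CompleteNormedModule)); intros; apply Hc).
  simpl. rewrite !Rabs_mult, (Rabs_right (/ (2 * PI))), (Rabs_right (RInt j _ _))
    by (lra || (left; apply Rinv_0_lt_compat; lra)).
  unfold Rdiv. rewrite Rmult_comm.
  apply Rmult_le_compat_l; [left; apply Rinv_0_lt_compat; lra|].
  apply Rmult_le_compat_l; [apply Rabs_pos | assumption].
Qed.

(** * The spatial profile of omega *)

Lemma omega_expr_re (v a X : R) : 0 < v -> v <> 1 ->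
  let om2 : C := Cmult Ci (RtoC a) in
  let om1 : C := Cmult (Cdiv (Cmult (RtoC 2) (Cmult Ci (RtoC v))) (RtoC (1 - v ^ 2))) om2 in
  let d : C := Cminus (RtoC X) (Cmult Ci (RtoC v)) in
  let e : C := Cminus (Copp Ci) (Cmult Ci (RtoC v)) in
  let z := Cplus (Cmult om1 (Cminus (Cinv d) (Cinv e)))
                 (Cmult om2 (Cminus (Cinv (Cmult d d)) (Cinv (Cmult e e)))) in
  fst (Cplus z (Cconj z)) = 4 * a * v / (v ^ 2 - 1) * (X * (X ^ 2 + 1) / (X ^ 2 + v ^ 2) ^ 2).
Proof.
  intros Hv Hv1 om2 om1 d e z.
  assert (v ^ 2 - 1 <> 0) by (intro Hq; apply Hv1; nra).
  assert (X ^ 2 + v ^ 2 <> 0) by nra.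
  subst z om1 om2 d e.
  unfold Cplus, Cmult, Cminus, Cdiv, Cinv, Copp, Cconj, RtoC, Ci; simpl.
  field. repeat split; nra.
Qed.

(* [omega(x, t)] is an amplitude times [profile (vc t) x]; in the variable [X = tan (x/2)] the
   profile is [(v^2+1)^2 X (X^2+1) / (X^2+v^2)^2]. *)
Definition profile (v x : R) : R :=
  (v ^ 2 + 1) ^ 2 * (sin (x / 2) * cos (x / 2))
  / (sin (x / 2) ^ 2 + v ^ 2 * cos (x / 2) ^ 2) ^ 2.

Lemma profile_denom_pos v y : 0 < v -> 0 < sin y ^ 2 + v ^ 2 * cos y ^ 2.
Proof. intro Hv. pose proof (sin2_cos2 y). unfold Rsqr in *. nra. Qed.

Lemma profile_continuous v x : 0 < v -> continuous (profile v) x.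
Proof.
  intro Hv. apply (ex_derive_continuous (V := R_NormedModule)).
  unfold profile. auto_derive. pose proof (profile_denom_pos v (x / 2) Hv). nra.
Qed.

Lemma sin_double_half x : sin x = 2 * sin (x / 2) * cos (x / 2).
Proof. rewrite <- sin_2a. f_equal. field. Qed.

Lemma profile_mul_sin v x :
  profile v x * sin x
  = 2 * (v ^ 2 + 1) ^ 2 * (sin (x / 2) * cos (x / 2)) ^ 2
    / (sin (x / 2) ^ 2 + v ^ 2 * cos (x / 2) ^ 2) ^ 2.
Proof. rewrite sin_double_half. unfold profile, Rdiv. ring. Qed.

Lemma profile_mul_sin_nonneg v x : 0 < v -> 0 <= profile v x * sin x.
Proof.
  intro Hv. rewrite profile_mul_sin.
  pose proof (profile_denom_pos v (x / 2) Hv).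
  apply Rmult_le_pos; [nra | left; apply Rinv_0_lt_compat; nra].
Qed.

Lemma profile_inv u x : 0 < u -> profile (/ u) x = profile u (PI - x).
Proof.
  intro Hu. unfold profile.
  replace ((PI - x) / 2) with (PI / 2 - x / 2) by field.
  rewrite sin_shift, cos_shift.
  pose proof (sin2_cos2 (x / 2)) as Hpy. unfold Rsqr in Hpy.
  field. split; nra.
Qed.

(* The pole of [omega_-] at [X = i v] makes the profile of size [v^-3] where [X] is of order [v]. *)
Lemma profile_lb v x : 0 < v <= 1 / 4 -> 2 * v <= x <= 4 * v ->
  1 / (100 * v ^ 3) <= profile v x /\ 1 / (200 * v ^ 2) <= profile v x * sin x.
Proof.
  intros Hv Hx.
  pose proof (sin_ge_half (x / 2) ltac:(lra)).
  pose proof (cos_ge_half (x / 2) ltac:(lra)).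
  pose proof (sin_lt_x (x / 2) ltac:(lra)).
  pose proof (COS_bound (x / 2)).
  pose proof (profile_denom_pos v (x / 2) ltac:(lra)) as HD.
  rewrite profile_mul_sin. unfold profile.
  set (sx := sin (x / 2)) in *. set (cx := cos (x / 2)) in *.
  assert (Hsc : v / 4 <= sx * cx) by nra.
  assert (sx ^ 2 <= 4 * v ^ 2) by nra.
  assert (v ^ 2 * cx ^ 2 <= v ^ 2) by (assert (cx ^ 2 <= 1) by nra; nra).
  assert (HDle : sx ^ 2 + v ^ 2 * cx ^ 2 <= 5 * v ^ 2) by lra.
  assert (Hamp : 1 <= (v ^ 2 + 1) ^ 2) by nra.
  split.
  - replace (1 / (100 * v ^ 3)) with ((v / 4) / (5 * v ^ 2) ^ 2) by (field; lra).
    apply div_sq_le; [split; nra | split; lra].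
  - replace (1 / (200 * v ^ 2)) with (2 * (v / 4) ^ 2 / (5 * v ^ 2) ^ 2) by (field; lra).
    apply div_sq_le; [split; [nra|] | split; lra].
    assert ((v / 4) ^ 2 <= (sx * cx) ^ 2) by (apply pow_incr; lra).
    nra.
Qed.

(* A type B window is the mirror image [x -> PI - x] of a type A window. *)
Lemma profile_window v p : 0 < p <= 1 / 4 -> v = p \/ v = / p ->
  exists a, - PI <= a /\ a + 2 * p <= PI /\
    forall x, a <= x <= a + 2 * p ->
      1 / (100 * p ^ 3) <= profile v x /\ 1 / (200 * p ^ 2) <= profile v x * sin x.
Proof.
  intros Hp [-> | ->]; pose proof PI2_3_2.
  - exists (2 * p). split; [lra | split; [lra|]].
    intros x Hx. apply profile_lb; lra.
  - exists (PI - 4 * p). split; [lra | split; [lra|]].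
    intros x Hx. rewrite profile_inv by lra. rewrite <- (sin_PI_x x).
    apply profile_lb; lra.
Qed.

(** * The limit of G and the thresholds on w0 *)

Definition Gfun_infty (nu v0 w0 : R) : R :=
  Ffun v0 + 2 * w0 * v0 / (nu * (v0 ^ 2 - 1) * (v0 ^ 2 + 1) ^ 2).

(* The thresholds [-(nu/2) f0 v0] and [-(nu/2) finf v0] are exactly the values of [w0]
   for which [Gfun_infty] equals [0] and [PI/2]. *)
Lemma w0_rescaling nu v0 w0 : 0 < nu -> 0 < v0 -> v0 <> 1 ->
  exists P, (v0 < 1 -> P < 0) /\ (1 < v0 -> 0 < P) /\
    w0 = P * (Gfun_infty nu v0 w0 - Ffun v0) /\
    nu / 2 * f0 v0 = P * Ffun v0 /\ nu / 2 * finf v0 = P * (Ffun v0 - PI / 2).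
Proof.
  intros Hnu Hv0 Hv1.
  assert (Hsq : v0 ^ 2 - 1 <> 0) by (intro Hq; apply Hv1; nra).
  assert (Hq : 0 < (v0 ^ 2 + 1) ^ 2 / v0)
    by (apply Rdiv_lt_0_compat; [apply pow_lt; nra | assumption]).
  exists (nu / 2 * (v0 ^ 2 - 1) * ((v0 ^ 2 + 1) ^ 2 / v0)).
  split; [|split; [|split; [|split]]].
  - intro. assert (nu / 2 * (v0 ^ 2 - 1) < 0) by nra. nra.
  - intro. assert (0 < nu / 2 * (v0 ^ 2 - 1)) by nra. nra.
  - unfold Gfun_infty. field. split; [nra | split; lra].
  - unfold f0, Ffun. field. split; [nra | lra].
  - unfold finf, Ffun. field. split; [nra | lra].
Qed.

Lemma conditionA_iff nu v0 w0 : 0 < nu -> 0 < v0 -> v0 <> 1 ->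
  ((0 < v0 < 1 /\ w0 > - (nu / 2) * f0 v0) \/ (v0 > 1 /\ w0 < - (nu / 2) * f0 v0))
  <-> Gfun_infty nu v0 w0 < 0.
Proof.
  intros Hnu Hv0 Hv1.
  destruct (w0_rescaling nu v0 w0 Hnu Hv0 Hv1) as [P [Hneg [Hpos [Hw [Hf _]]]]].
  replace (- (nu / 2) * f0 v0) with (- (P * Ffun v0)) by lra.
  set (L := Gfun_infty nu v0 w0) in Hw |- *. rewrite Hw. destruct (Rlt_or_le v0 1) as [Hlt | Hge].
  - specialize (Hneg Hlt). split; [intros [[_ H] | [H _]]; nra | intro; left; split; nra].
  - assert (Hgt : 1 < v0) by (destruct Hge; [assumption | congruence]).
    specialize (Hpos Hgt). split; [intros [[H _] | [_ H]]; nra | intro; right; split; nra].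
Qed.

Lemma conditionB_iff nu v0 w0 : 0 < nu -> 0 < v0 -> v0 <> 1 ->
  ((0 < v0 < 1 /\ w0 < - (nu / 2) * finf v0) \/ (v0 > 1 /\ w0 > - (nu / 2) * finf v0))
  <-> PI / 2 < Gfun_infty nu v0 w0.
Proof.
  intros Hnu Hv0 Hv1.
  destruct (w0_rescaling nu v0 w0 Hnu Hv0 Hv1) as [P [Hneg [Hpos [Hw [_ Hf]]]]].
  replace (- (nu / 2) * finf v0) with (- (P * (Ffun v0 - PI / 2))) by lra.
  set (L := Gfun_infty nu v0 w0) in Hw |- *. rewrite Hw. destruct (Rlt_or_le v0 1) as [Hlt | Hge].
  - specialize (Hneg Hlt). split; [intros [[_ H] | [H _]]; nra | intro; left; split; nra].
  - assert (Hgt : 1 < v0) by (destruct Hge; [assumption | congruence]).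
    specialize (Hpos Hgt). split; [intros [[H _] | [_ H]]; nra | intro; right; split; nra].
Qed.

Definition omega_amplitude (nu v0 w0 t : R) : R :=
  2 * nu * (Gfun_infty nu v0 w0 - Ffun v0) * exp (- nu * t).

(** * Blowup and global existence *)

Section Evolution.

Variables nu v0 w0 : R.
Hypothesis hnu : 0 < nu.
Hypothesis hv0 : 0 < v0.
Hypothesis hv1 : v0 <> 1.

Local Notation G := (Gfun nu v0 w0).
Local Notation Ginf := (Gfun_infty nu v0 w0).
Local Notation amp := (omega_amplitude nu v0 w0).
Local Notation defined_before tc :=
  (forall t, 0 <= t < tc -> defined_at nu v0 w0 t /\ 0 < vc nu v0 w0 t).
Local Notation norms_unbounded tc :=
  (filterlim (fun t => L2norm (fun x => omega nu v0 w0 x t)) (at_left tc) (Rbar_locally p_infty)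
   /\ (forall M : R, at_left tc
         (fun t => Rbar_lt (Finite M) (B0norm (fun x => omega nu v0 w0 x t))))).

Lemma Gfun_convex t : G t = exp (- nu * t) * Ffun v0 + (1 - exp (- nu * t)) * Ginf.
Proof. unfold Gfun, Gfun_infty, Rdiv. ring. Qed.

Lemma Gfun_continuous t : continuous G t.
Proof.
  apply (ex_derive_continuous (V := R_NormedModule)).
  unfold Gfun. auto_derive. exact I.
Qed.

Lemma defined_at_convex t th L :
  0 < th <= 1 -> 0 <= L <= PI / 2 -> G t = th * Ffun v0 + (1 - th) * L ->
  defined_at nu v0 w0 t.
Proof.
  intros Hth HL HG. unfold defined_at. rewrite HG.
  pose proof (Ffun_pos v0 hv0). pose proof (Ffun_lt_PI2 v0 hv0). nra.
Qed.

Lemma exp_neg_lt_1 t : 0 < t -> exp (- nu * t) < 1.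
Proof. intro Ht. rewrite <- exp_0. apply exp_increasing. nra. Qed.

Lemma exp_neg_le_1 t : 0 <= t -> exp (- nu * t) <= 1.
Proof.
  intros [Ht | <-]; [left; apply exp_neg_lt_1, Ht|].
  rewrite Rmult_0_r, exp_0. lra.
Qed.

Lemma global_existence :
  0 <= Ginf <= PI / 2 -> forall t, 0 <= t -> defined_at nu v0 w0 t /\ 0 < vc nu v0 w0 t.
Proof.
  intros HL t Ht.
  assert (Hdef : defined_at nu v0 w0 t).
  { apply (defined_at_convex t (exp (- nu * t)) Ginf); [| assumption | apply Gfun_convex].
    split; [apply exp_pos | apply exp_neg_le_1, Ht]. }
  split; [assumption | apply vc_spec, Hdef].
Qed.

(* Before [tc], [G t] is a convex combination of [Ffun v0] and [L] with positive weight on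
   [Ffun v0]. *)
Lemma Gfun_reaches L : 0 <= L <= PI / 2 ->
  Ginf < L < Ffun v0 \/ Ffun v0 < L < Ginf ->
  exists tc, 0 < tc /\ G tc = L /\ defined_before tc.
Proof.
  intros HL Hcross.
  set (thc := (L - Ginf) / (Ffun v0 - Ginf)).
  assert (Hthc : 0 < thc < 1) by (apply ratio_between; lra).
  assert (HLc : L = thc * Ffun v0 + (1 - thc) * Ginf) by (unfold thc; field; lra).
  set (tc := - ln thc / nu).
  assert (Hexp : exp (- nu * tc) = thc)
    by (unfold tc; replace (- nu * (- ln thc / nu)) with (ln thc) by (field; lra);
        apply exp_ln; lra).
  exists tc. split; [|split].
  - assert (ln thc < 0) by (rewrite <- ln_1; apply ln_increasing; lra).
    apply Rdiv_lt_0_compat; lra.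
  - rewrite Gfun_convex, Hexp. lra.
  - intros t Ht.
    assert (Hlt : thc < exp (- nu * t)) by (rewrite <- Hexp; apply exp_increasing; nra).
    pose proof (exp_neg_le_1 t (proj1 Ht)).
    assert (Hdef : defined_at nu v0 w0 t).
    { apply (defined_at_convex t ((exp (- nu * t) - thc) / (1 - thc)) L); [| assumption |].
      - split; [apply Rdiv_lt_0_compat; lra|].
        apply (Rmult_le_reg_r (1 - thc)); [lra|].
        unfold Rdiv. rewrite Rmult_assoc, Rinv_l; lra.
      - rewrite Gfun_convex, HLc. field. lra. }
    split; [assumption | apply vc_spec, Hdef].
Qed.

Lemma Gfun_near tc e : 0 < e -> at_left tc (fun t => Rabs (G t - G tc) < e).
Proof.
  intro He.
  apply (filter_le_within (F := locally tc)).
  exact (proj1 (filterlim_locally _ _) (Gfun_continuous tc) (mkposreal e He)).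
Qed.

Lemma Gfun_at_blowup tc L :
  0 < tc -> defined_before tc ->
  filterlim (fun t => Ffun (vc nu v0 w0 t)) (at_left tc) (locally L) -> G tc = L.
Proof.
  intros Htc Hdef Hlim.
  apply (filterlim_locally_unique (F := at_left tc) G).
  - apply (filterlim_filter_le_1 (F := locally tc));
      [apply filter_le_within | apply Gfun_continuous].
  - apply (filterlim_ext_loc (fun t => Ffun (vc nu v0 w0 t))); [|assumption].
    generalize (at_left_nonneg tc Htc). apply filter_imp.
    intros t Ht. apply vc_spec, Hdef, Ht.
Qed.

Lemma blowupA_at_Gfun tc : blowupA_at nu v0 w0 tc -> G tc = 0.
Proof.
  intros [Htc [Hdef Hlim]]. apply (Gfun_at_blowup tc 0 Htc Hdef).
  eapply filterlim_comp; [exact Hlim|].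
  assert (HF : filterlim Ffun (locally 0) (locally 0))
    by (rewrite <- Ffun_0 at 2; apply Ffun_continuous).
  exact (filterlim_filter_le_1 _ (filter_le_within _) HF).
Qed.

Lemma blowupB_at_Gfun tc : blowupB_at nu v0 w0 tc -> G tc = PI / 2.
Proof.
  intros [Htc [Hdef Hlim]]. apply (Gfun_at_blowup tc (PI / 2) Htc Hdef).
  eapply filterlim_comp; [exact Hlim | exact Ffun_lim_infty].
Qed.

Lemma vc_to_0 tc : 0 < tc -> defined_before tc -> G tc = 0 ->
  filterlim (vc nu v0 w0) (at_left tc) (at_right 0).
Proof.
  intros Htc Hdef HG P [eps HP]. unfold filtermap.
  pose proof (Ffun_pos eps (cond_pos eps)) as Heps.
  generalize (filter_and _ _ (at_left_nonneg tc Htc) (Gfun_near tc _ Heps)).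
  apply filter_imp. intros t [Ht Hnear].
  destruct (Hdef t Ht) as [Hd Hpos]. destruct (vc_spec _ _ _ _ Hd) as [_ HF].
  rewrite HG, Rminus_0_r in Hnear.
  apply HP; [|assumption].
  change (Rabs (vc nu v0 w0 t - 0) < eps).
  rewrite Rminus_0_r, Rabs_right by lra.
  apply Ffun_lt_reg; [apply Rlt_le, cond_pos|]. rewrite HF.
  pose proof (Rle_abs (G t)). lra.
Qed.

Lemma vc_to_infty tc : 0 < tc -> defined_before tc -> G tc = PI / 2 ->
  filterlim (vc nu v0 w0) (at_left tc) (Rbar_locally p_infty).
Proof.
  intros Htc Hdef HG P [M HP]. unfold filtermap.
  set (M' := Rmax M 0 + 1).
  assert (HM' : 0 < M') by (unfold M'; pose proof (Rmax_r M 0); lra).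
  pose proof (Ffun_lt_PI2 M' HM') as Hgap.
  generalize (filter_and _ _ (at_left_nonneg tc Htc) (Gfun_near tc (PI / 2 - Ffun M') ltac:(lra))).
  apply filter_imp. intros t [Ht Hnear].
  destruct (Hdef t Ht) as [Hd Hpos]. destruct (vc_spec _ _ _ _ Hd) as [_ HF].
  rewrite HG in Hnear. apply Rabs_def2 in Hnear.
  apply HP. apply Rle_lt_trans with M'; [unfold M'; pose proof (Rmax_l M 0); lra|].
  apply Ffun_lt_reg; [lra|]. rewrite HF. lra.
Qed.

Lemma blowupA_iff : blowupA nu v0 w0 <-> Ginf < 0.
Proof.
  pose proof (Ffun_pos v0 hv0). pose proof PI_RGT_0.
  split.
  - intros [tc Hb]. pose proof (blowupA_at_Gfun tc Hb) as HG. destruct Hb as [Htc _].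
    rewrite Gfun_convex in HG.
    pose proof (exp_neg_lt_1 tc Htc). pose proof (exp_pos (- nu * tc)). nra.
  - intro HL. destruct (Gfun_reaches 0) as [tc [Htc [HG Hdef]]]; [lra | lra |].
    exists tc. split; [assumption | split; [assumption | apply vc_to_0; assumption]].
Qed.

Lemma blowupB_iff : blowupB nu v0 w0 <-> PI / 2 < Ginf.
Proof.
  pose proof (Ffun_lt_PI2 v0 hv0). pose proof PI_RGT_0.
  split.
  - intros [tc Hb]. pose proof (blowupB_at_Gfun tc Hb) as HG. destruct Hb as [Htc _].
    rewrite Gfun_convex in HG.
    pose proof (exp_neg_lt_1 tc Htc). pose proof (exp_pos (- nu * tc)). nra.
  - intro HL. destruct (Gfun_reaches (PI / 2)) as [tc [Htc [HG Hdef]]]; [lra | lra |].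
    exists tc. split; [assumption | split; [assumption | apply vc_to_infty; assumption]].
Qed.

Lemma omega_eq_profile x t :
  0 < vc nu v0 w0 t -> vc nu v0 w0 t <> 1 -> - PI < x < PI ->
  omega nu v0 w0 x t = amp t * profile (vc nu v0 w0 t) x.
Proof.
  intros Hv Hv1 Hx.
  unfold omega, omega_minus. cbv zeta. rewrite omega_expr_re by assumption.
  unfold w2i, omega_amplitude, Gfun_infty, profile, tan.
  assert (v0 ^ 2 - 1 <> 0) by (intro Hq; apply hv1; nra).
  assert (vc nu v0 w0 t ^ 2 - 1 <> 0) by (intro Hq; apply Hv1; nra).
  set (v := vc nu v0 w0 t) in *. set (sx := sin (x / 2)). set (cx := cos (x / 2)).
  assert (Hc : 0 < cx) by (apply cos_gt_0; lra).
  assert (Hsc : sx ^ 2 + cx ^ 2 = 1)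
    by (pose proof (sin2_cos2 (x / 2)) as Hpy; unfold Rsqr in Hpy; fold sx cx in Hpy; nra).
  pose proof (profile_denom_pos v (x / 2) Hv) as HD. fold sx cx in HD.
  replace (sx / cx * ((sx / cx) ^ 2 + 1) / ((sx / cx) ^ 2 + v ^ 2) ^ 2)
    with (sx * cx * (sx ^ 2 + cx ^ 2) / (sx ^ 2 + v ^ 2 * cx ^ 2) ^ 2)
    by (field; split; nra).
  rewrite Hsc. field. repeat split; try assumption; nra.
Qed.

Lemma omega_norms_ge t p : 0 < p <= 1 / 4 -> vc nu v0 w0 t = p \/ vc nu v0 w0 t = / p ->
  Rabs (amp t) / (800 * p) <= L2norm (fun x => omega nu v0 w0 x t) /\
  Rbar_le (Rabs (amp t) / (800 * p)) (B0norm (fun x => omega nu v0 w0 x t)).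
Proof.
  intros Hp Hvp.
  set (v := vc nu v0 w0 t) in *.
  assert (Hv : 0 < v /\ v <> 1).
  { destruct Hvp as [-> | ->]; [lra|].
    assert (4 <= / p) by (replace 4 with (/ (1 / 4)) by field; apply Rinv_le_contravar; lra).
    lra. }
  destruct (profile_window v p Hp Hvp) as [a [Ha [Hb Hwin]]].
  pose proof PI_4. pose proof PI_RGT_0. pose proof (Rabs_pos (amp t)).
  assert (Hp3 : 0 < p ^ 3) by (apply pow_lt; lra).
  split.
  - apply Rle_trans with (2 * p * (Rabs (amp t) / (100 * p ^ 3))).
    { replace (2 * p * (Rabs (amp t) / (100 * p ^ 3))) with (Rabs (amp t) / (50 * p ^ 2))
        by (field; lra).
      unfold Rdiv. apply Rmult_le_compat_l; [lra|].
      apply Rinv_le_contravar; nra. }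
    apply Rle_trans with (sqrt (a + 2 * p - a) * (Rabs (amp t) / (100 * p ^ 3))).
    { replace (a + 2 * p - a) with (2 * p) by ring.
      apply Rmult_le_compat_r; [apply Rdiv_le_0_compat; lra|].
      apply x_le_sqrt. lra. }
    apply (L2norm_ge _ (fun x => amp t * profile v x)); [lra | lra | | | |].
    + intros x Hx. apply omega_eq_profile; tauto.
    + intro x. apply (continuous_mult (K := R_AbsRing));
        [apply continuous_const | apply profile_continuous; tauto].
    + apply Rdiv_le_0_compat; lra.
    + intros x Hx. destruct (Hwin x Hx) as [Hlb _].
      assert (0 < 1 / (100 * p ^ 3)) by (apply Rdiv_lt_0_compat; lra).
      rewrite Rabs_mult, (Rabs_right (profile v x)) by lra.
      replace (Rabs (amp t) / (100 * p ^ 3)) with (Rabs (amp t) * (1 / (100 * p ^ 3)))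
        by (field; lra).
      apply Rmult_le_compat_l; lra.
  - apply (Rbar_le_trans _ (Finite (Rabs (amp t) * ((a + 2 * p - a) * (1 / (200 * p ^ 2))) / (2 * PI)))).
    { replace (Rabs (amp t) * ((a + 2 * p - a) * (1 / (200 * p ^ 2))) / (2 * PI))
        with (Rabs (amp t) / (200 * PI * p)) by (field; lra).
      change (Rabs (amp t) / (800 * p) <= Rabs (amp t) / (200 * PI * p)).
      unfold Rdiv. apply Rmult_le_compat_l; [lra|].
      apply Rinv_le_contravar; nra. }
    apply (B0norm_ge _ (fun x => profile v x * sin x)); [lra | lra | | | |].
    + intros x Hx. rewrite omega_eq_profile by tauto. fold v. ring.
    + intro x. apply (continuous_mult (K := R_AbsRing));
        [apply profile_continuous; tauto | apply continuity_pt_filterlim, continuity_sin].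
    + intro x. apply profile_mul_sin_nonneg. tauto.
    + intros x Hx. apply Hwin, Hx.
Qed.

Lemma amplitude_ge t tc : 0 <= t <= tc -> Rabs (amp tc) <= Rabs (amp t).
Proof.
  intro Ht. unfold omega_amplitude.
  rewrite (Rabs_mult _ (exp (- nu * tc))), (Rabs_mult _ (exp (- nu * t))),
    !(Rabs_right (exp _)) by (left; apply exp_pos).
  apply Rmult_le_compat_l; [apply Rabs_pos|].
  destruct (Req_dec t tc) as [-> | Hne]; [lra|].
  left. apply exp_increasing. nra.
Qed.

(* [p t] is the small length scale of the profile: [vc t] for type A, [/ vc t] for type B. *)
Lemma norms_blowup tc (p : R -> R) :
  0 < tc -> Ginf <> Ffun v0 ->
  (forall t, 0 <= t < tc -> vc nu v0 w0 t = p t \/ vc nu v0 w0 t = / p t) ->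
  (forall d, 0 < d -> at_left tc (fun t => 0 < p t < d)) ->
  norms_unbounded tc.
Proof.
  intros Htc HL Hp Hsmall.
  set (C0 := Rabs (amp tc)).
  assert (HC0 : 0 < C0).
  { unfold C0, omega_amplitude. apply Rabs_pos_lt.
    repeat apply Rmult_integral_contrapositive_currified; try lra.
    apply Rgt_not_eq, exp_pos. }
  assert (Hev : forall M, at_left tc (fun t =>
            M < L2norm (fun x => omega nu v0 w0 x t) /\
            Rbar_lt M (B0norm (fun x => omega nu v0 w0 x t)))).
  { intro M.
    set (d := Rmin (1 / 4) (C0 / 800 / (Rabs M + 1))).
    assert (Hd : 0 < d)
      by (apply Rmin_pos; [lra | apply Rdiv_lt_0_compat; pose proof (Rabs_pos M); lra]).
    generalize (filter_and _ _ (at_left_nonneg tc Htc) (Hsmall d Hd)).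
    apply filter_imp. intros t [Ht [Hpt Hptd]].
    assert (Hpd : p t <= 1 / 4 /\ p t < C0 / 800 / (Rabs M + 1))
      by (pose proof (Rmin_l (1 / 4) (C0 / 800 / (Rabs M + 1)));
          pose proof (Rmin_r (1 / 4) (C0 / 800 / (Rabs M + 1))); unfold d in Hptd; lra).
    assert (HM : M < Rabs (amp t) / (800 * p t)).
    { apply Rlt_le_trans with (C0 / 800 / p t); [apply lt_div_of_small; lra|].
      pose proof (amplitude_ge t tc ltac:(lra)) as HA. fold C0 in HA.
      replace (C0 / 800 / p t) with (C0 / (800 * p t)) by (field; lra).
      unfold Rdiv. apply Rmult_le_compat_r; [left; apply Rinv_0_lt_compat; lra | lra]. }
    destruct (omega_norms_ge t (p t) ltac:(lra) (Hp t Ht)) as [HL2 HB0].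
    split; [lra|].
    apply (Rbar_lt_le_trans _ (Finite (Rabs (amp t) / (800 * p t)))); [exact HM | exact HB0]. }
  split.
  - intros P [M HM]. unfold filtermap.
    generalize (Hev M). apply filter_imp. intros t [Ht _]. apply HM, Ht.
  - intro M. generalize (Hev M). apply filter_imp. intros t [_ Ht]. exact Ht.
Qed.

Lemma blowup_norms tc :
  blowupA_at nu v0 w0 tc \/ blowupB_at nu v0 w0 tc -> norms_unbounded tc.
Proof.
  intros [Hb | Hb].
  - assert (HL : Ginf < 0) by (apply blowupA_iff; exists tc; exact Hb).
    pose proof (Ffun_pos v0 hv0).
    destruct Hb as [Htc [_ Hlim]].
    apply (norms_blowup tc (vc nu v0 w0) Htc ltac:(lra)); [intros; left; reflexivity|].
    intros d Hd. apply (Hlim (fun z => 0 < z < d)).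
    exists (mkposreal d Hd). intros z Hz Hz0.
    change (Rabs (z - 0) < d) in Hz. rewrite Rminus_0_r in Hz.
    pose proof (Rle_abs z). lra.
  - assert (HL : PI / 2 < Ginf) by (apply blowupB_iff; exists tc; exact Hb).
    pose proof (Ffun_lt_PI2 v0 hv0).
    destruct Hb as [Htc [_ Hlim]].
    apply (norms_blowup tc (fun t => / vc nu v0 w0 t) Htc ltac:(lra));
      [intros; right; rewrite Rinv_inv; reflexivity|].
    intros d Hd.
    assert (Hlarge : at_left tc (fun t => / d < vc nu v0 w0 t))
      by (apply (Hlim (fun z => / d < z)); exists (/ d); auto).
    generalize Hlarge. apply filter_imp. intros t Ht.
    assert (0 < / d) by (apply Rinv_0_lt_compat, Hd).
    split; [apply Rinv_0_lt_compat; lra|].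
    rewrite <- (Rinv_inv d). apply Rinv_lt_contravar; [nra | assumption].
Qed.

End Evolution.

Theorem theorem3p7 (nu v0 w0 : R) (hnu : 0 < nu) (hv0 : 0 < v0) (hv1 : v0 <> 1) :
  (blowupA nu v0 w0 <->
     ((0 < v0 < 1 /\ w0 > - (nu / 2) * f0 v0) \/ (v0 > 1 /\ w0 < - (nu / 2) * f0 v0)))
  /\
  (blowupB nu v0 w0 <->
     ((0 < v0 < 1 /\ w0 < - (nu / 2) * finf v0) \/ (v0 > 1 /\ w0 > - (nu / 2) * finf v0)))
  /\
  (forall tc, blowupA_at nu v0 w0 tc \/ blowupB_at nu v0 w0 tc ->
     filterlim (fun t => L2norm (fun x => omega nu v0 w0 x t)) (at_left tc)
               (Rbar_locally p_infty)
     /\ (forall M : R, at_left tc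
           (fun t => Rbar_lt (Finite M) (B0norm (fun x => omega nu v0 w0 x t)))))
  /\
  (((0 < v0 < 1 /\ - (nu / 2) * finf v0 <= w0 <= - (nu / 2) * f0 v0)
    \/ (v0 > 1 /\ - (nu / 2) * f0 v0 <= w0 <= - (nu / 2) * finf v0)) ->
     ~ blowupA nu v0 w0 /\ ~ blowupB nu v0 w0
     /\ (forall t, 0 < t -> defined_at nu v0 w0 t /\ 0 < vc nu v0 w0 t)).
Proof.
  pose proof (conditionA_iff nu v0 w0 hnu hv0 hv1) as HcondA.
  pose proof (conditionB_iff nu v0 w0 hnu hv0 hv1) as HcondB.
  pose proof (blowupA_iff nu v0 w0 hnu hv0) as HA.
  pose proof (blowupB_iff nu v0 w0 hnu hv0) as HB.
  split; [|split; [|split]].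
  - rewrite HcondA. exact HA.
  - rewrite HcondB. exact HB.
  - exact (blowup_norms nu v0 w0 hnu hv0 hv1).
  - intro Hcond.
    assert (HnA : ~ Gfun_infty nu v0 w0 < 0)
      by (rewrite <- HcondA; intros [[? ?] | [? ?]]; destruct Hcond as [[? ?] | [? ?]]; lra).
    assert (HnB : ~ PI / 2 < Gfun_infty nu v0 w0)
      by (rewrite <- HcondB; intros [[? ?] | [? ?]]; destruct Hcond as [[? ?] | [? ?]]; lra).
    split; [rewrite HA; exact HnA | split; [rewrite HB; exact HnB|]].
    intros t Ht. apply global_existence; [assumption | assumption | lra | lra].
Qed.
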